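(* Let $A\in\mathbb{R}^{m\times n}$ with $i$-th row $a_i^T$, $b\in\mathbb{R}^m$, and consider the affine-ReLU function $F(x)=\mathrm{relu}(Ax+b)$ (ReLU applied entrywise, $\mathrm{relu}(t)=\max(0,t)$). Let $x_0\in\mathbb{R}^n$, $\epsilon\ge0$, $D=\mathrm{diag}(d_1,\dots,d_n)$ with $d_j\in\{0,1\}$, and $\mathcal{X}=\{x_0+D\Delta x:\ \|\Delta x\|\le\epsilon\}$. Let $y_0=Ax_0+b$, $\mathcal{Y}=\{Ax+b:x\in\mathcal{X}\}$, $\mathcal{Y}_i=\{y_i: y\in\mathcal{Y}\}$, and $\bar y_i=\max\mathcal{Y}_i$. Define $$r_i=\begin{cases}0,& \mathcal{Y}_i=\{y_{0,i}\},\\[2pt] \dfrac{\mathrm{relu}(\bar y_i)-\mathrm{relu}(y_{0,i})}{\bar y_i-y_{0,i}},&\text{otherwise},\end{cases}\qquad R=\mathrm{diag}(r_1,\dots,r_m).$$ Then the local Lipschitz constant of $F$ satisfies $$L(x_0,\mathcal{X})\le\|RAD\|,$$ where $\|RAD\|$ is the spectral norm.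
   Context: $\|\cdot\|$ is the Euclidean norm on vectors and the induced operator (spectral) norm on matrices. For $F:\mathbb{R}^n\to\mathbb{R}^m$, $x_0\in\mathbb{R}^n$ and $\mathcal{X}\subseteq\mathbb{R}^n$, the local Lipschitz constant is $L(x_0,\mathcal{X})=\sup_{x\in\mathcal{X},\,x\neq x_0}\frac{\|F(x)-F(x_0)\|}{\|x-x_0\|}$, with the convention that the supremum over an empty set is $0$. $y_i, y_{0,i}$ denote $i$-th entries. *)

From HB Require Import structures.
From mathcomp Require Import all_boot all_order all_algebra.
From mathcomp Require Import all_classical all_reals.
From mathcomp Require Import ereal.
Set Implicit Arguments. Unset Strict Implicit. Unset Printing Implicit Defensive.
Import Order.TTheory GRing.Theory Num.Theory.
Local Open Scope classical_set_scope.
Local Open Scope ring_scope.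

Section Defs.
Variable R : realType.

Definition enorm (k : nat) (v : 'cV[R]_k) : R :=
  Num.sqrt (\sum_(i < k) (v i 0) ^+ 2).

(* Spectral (induced operator) norm: sup of ||M v|| over ||v|| <= 1
   (a nonempty bounded set, so the real sup is the genuine supremum). *)
Definition opnorm (p q : nat) (M : 'M[R]_(p, q)) : R :=
  sup [set enorm (M *m v) | v in [set v : 'cV[R]_q | enorm v <= 1]].

Definition relu (t : R) : R := Num.max 0 t.

Definition relu_vec (k : nat) (y : 'cV[R]_k) : 'cV[R]_k := map_mx relu y.

(* local Lipschitz constant, extended-real valued (so an unbounded set gives
   +oo); the union with {0} implements the convention sup(empty) = 0
   (all ratios are >= 0, so it changes nothing when the set is nonempty). *)
Definition local_lip (p q : nat) (F : 'cV[R]_p -> 'cV[R]_q)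
    (x0 : 'cV[R]_p) (X : set 'cV[R]_p) : \bar R :=
  ereal_sup ([set 0%E] `|`
    [set ((enorm (F x - F x0)) / enorm (x - x0))%:E | x in [set x | X x /\ x <> x0]]).

Definition diag01 (n : nat) (d : 'I_n -> bool) : 'M[R]_n :=
  diag_mx (\row_j (d j)%:R).

Definition Xset (n : nat) (x0 : 'cV[R]_n) (D : 'M[R]_n) (eps : R) : set 'cV[R]_n :=
  [set x0 + D *m dx | dx in [set dx : 'cV[R]_n | enorm dx <= eps]].

Definition Yi (m n : nat) (A : 'M[R]_(m, n)) (b : 'cV[R]_m) (X : set 'cV[R]_n)
    (i : 'I_m) : set R :=
  [set (A *m x + b) i 0 | x in X].

(* r_i as in the paper; ybar_i = max Y_i is taken as sup Y_i (Y_i is compact,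
   so sup = max). *)
Definition rcoef (m n : nat) (A : 'M[R]_(m, n)) (b : 'cV[R]_m) (x0 : 'cV[R]_n)
    (X : set 'cV[R]_n) (i : 'I_m) : R :=
  let y0i := (A *m x0 + b) i 0 in
  let ybar := sup (Yi A b X i) in
  if `[< Yi A b X i = [set y0i] >] then 0
  else (relu ybar - relu y0i) / (ybar - y0i).

Definition Rmat (m n : nat) (A : 'M[R]_(m, n)) (b : 'cV[R]_m) (x0 : 'cV[R]_n)
    (X : set 'cV[R]_n) : 'M[R]_m :=
  diag_mx (\row_i rcoef A b x0 X i).

End Defs.

From HB Require Import structures.
From mathcomp Require Import all_boot all_order all_algebra.
From mathcomp Require Import all_classical all_reals.
From mathcomp Require Import ereal.
From mathcomp Require Import ring lra.
Import Order.TTheory GRing.Theory Num.Theory.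
Local Open Scope classical_set_scope.
Local Open Scope ring_scope.
Set Implicit Arguments. Unset Strict Implicit.

(* Write a point of X as x = x0 + w with w = D dx, ||dx|| <= eps.
   Entry i of F(x) - F(x0) is relu(y0_i + t_i) - relu(y0_i) with t_i = (A w)_i,
   and y0_i + t_i lies in the set Y_i, which is bounded and symmetric about y0_i
   (dx |-> -dx preserves X).  For such a set, relu is controlled on it by the
   secant slope r_i through its supremum:  |relu y - relu y0_i| <= r_i |y - y0_i|
   (if Y_i is not a singleton, y0_i < sup Y_i by symmetry, and the secant bound
   follows from convexity and monotonicity of relu).  Hence, entrywise,
   |F(x) - F(x0)| <= |R A w| = |(R A D) w| because D is idempotent, so by
   monotonicity of the Euclidean norm ||F(x) - F(x0)|| <= ||RAD|| ||x - x0||. *)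

Section EuclideanNorm.
Variable R : realType.

Lemma enorm_ge0 k (v : 'cV[R]_k) : 0 <= enorm v.
Proof. exact: sqrtr_ge0. Qed.

Lemma enorm0 k : enorm (0 : 'cV[R]_k) = 0.
Proof. by rewrite /enorm big1 ?sqrtr0 // => i _; rewrite mxE expr0n. Qed.

Lemma enorm_eq0 k (v : 'cV[R]_k) : enorm v = 0 -> v = 0.
Proof.
move=> /eqP; rewrite sqrtr_eq0 => sum_le0.
have sum0 : \sum_(i < k) v i 0 ^+ 2 = 0.
  by apply/eqP; rewrite eq_le sum_le0; apply: sumr_ge0 => i _; exact: sqr_ge0.
apply/matrixP => i j; rewrite (ord1 j) mxE.
have /eqP := @psumr_eq0P _ _ _ _ (fun i _ => sqr_ge0 (v i 0)) sum0 i isT.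
by rewrite sqrf_eq0 => /eqP.
Qed.

Lemma enorm_mono k (u w : 'cV[R]_k) :
  (forall i, `|u i 0| <= `|w i 0|) -> enorm u <= enorm w.
Proof.
move=> le_uw; rewrite /enorm ler_sqrt; last by apply: sumr_ge0 => i _; exact: sqr_ge0.
apply: ler_sum => i _; rewrite -(real_normK (num_real (u i 0))).
by rewrite -(real_normK (num_real (w i 0))) lerXn2r // ?nnegrE.
Qed.

Lemma abs_le_enorm k (v : 'cV[R]_k) j : `|v j 0| <= enorm v.
Proof.
rewrite /enorm -sqrtr_sqr ler_sqrt; last by apply: sumr_ge0 => i _; exact: sqr_ge0.
by rewrite (bigD1 j) //= lerDl; apply: sumr_ge0 => i _; exact: sqr_ge0.
Qed.

Lemma enormZ k (c : R) (v : 'cV[R]_k) : enorm (c *: v) = `|c| * enorm v.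
Proof.
rewrite /enorm (eq_bigr (fun i => c ^+ 2 * v i 0 ^+ 2)); last first.
  by move=> i _; rewrite mxE exprMn.
by rewrite -mulr_sumr sqrtrM ?sqr_ge0 // sqrtr_sqr.
Qed.

Lemma enormN k (v : 'cV[R]_k) : enorm (- v) = enorm v.
Proof. by rewrite -scaleN1r enormZ normrN normr1 mul1r. Qed.

Lemma entry_bound p q (M : 'M[R]_(p, q)) (v : 'cV[R]_q) i :
  `|(M *m v) i 0| <= (\sum_j `|M i j|) * enorm v.
Proof.
rewrite mxE mulr_suml; apply: le_trans (ler_norm_sum _ _ _) _.
apply: ler_sum => j _; rewrite normrM; apply: ler_wpM2l => //.
exact: abs_le_enorm.
Qed.

End EuclideanNorm.

Section OperatorNorm.
Variable R : realType.

Lemma opnorm_has_sup p q (M : 'M[R]_(p, q)) :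
  has_sup [set enorm (M *m v) | v in [set v : 'cV[R]_q | enorm v <= 1]].
Proof.
split; first by exists (enorm (M *m 0)), 0 => //=; rewrite enorm0.
exists (enorm (\col_i (\sum_j `|M i j|) : 'cV[R]_p)).
move=> _ [v /= v_le1 <-]; apply: enorm_mono => i.
rewrite mxE; apply: le_trans (entry_bound M v i) _.
by rewrite ger0_norm ?sumr_ge0 // ler_piMr ?sumr_ge0.
Qed.

Lemma opnorm_ge0 p q (M : 'M[R]_(p, q)) : 0 <= opnorm M.
Proof.
apply: (ub_le_sup (proj2 (opnorm_has_sup M))).
by exists 0 => //=; rewrite ?enorm0 // mulmx0 enorm0.
Qed.

Lemma opnorm_bound p q (M : 'M[R]_(p, q)) w :
  enorm (M *m w) <= opnorm M * enorm w.
Proof.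
have [/enorm_eq0 ->|w_neq0] := eqVneq (enorm w) 0.
  by rewrite mulmx0 !enorm0 mulr0.
have w_gt0 : 0 < enorm w by rewrite lt_def w_neq0 enorm_ge0.
have inv_ge0 : 0 <= (enorm w)^-1 by rewrite invr_ge0 enorm_ge0.
rewrite -ler_pdivrMr // (_ : _ / _ = enorm (M *m ((enorm w)^-1 *: w))); last first.
  by rewrite -scalemxAr enormZ ger0_norm // mulrC.
apply: (ub_le_sup (proj2 (opnorm_has_sup M))).
by exists ((enorm w)^-1 *: w) => //=; rewrite enormZ ger0_norm // mulVf.
Qed.

End OperatorNorm.

Section ReluSecant.
Variable R : realType.

Lemma relu_pos (t : R) : 0 <= t -> relu t = t.
Proof. by move=> t_ge0; apply/max_idPr. Qed.

Lemma relu_neg (t : R) : t <= 0 -> relu t = 0.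
Proof. by move=> t_le0; apply/max_idPl. Qed.

Lemma relu_le (a c : R) : a <= c -> relu a <= relu c.
Proof. by move=> le_ac; rewrite /relu; apply: le_max2. Qed.

Lemma relu_cases (t : R) : (0 <= t /\ relu t = t) \/ (t < 0 /\ relu t = 0).
Proof.
by have [t_ge0|t_lt0] := lerP 0 t; [left; rewrite relu_pos | right; rewrite relu_neg ?ltW].
Qed.

Lemma relu_lip (y y0 : R) : `|relu y - relu y0| <= `|y - y0|.
Proof.
have ge_d := ler_norm (y - y0); have ge_nd := ler_norm (y0 - y).
rewrite distrC in ge_nd; rewrite ler_norml.
by case: (relu_cases y) => -[? ->]; case: (relu_cases y0) => -[? ->]; lra.
Qed.

(* For y0 >= 0 the slope is 1
   and this is the Lipschitz bound; for y0 < 0 it expresses that the slope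
   y / (y - y0) of relu between y0 and y > 0 grows with y. *)
Lemma relu_secant (y0 yb y : R) : y0 < yb -> y <= yb ->
  `|relu y - relu y0| <= (relu yb - relu y0) / (yb - y0) * `|y - y0|.
Proof.
move=> y0_lt_yb y_le_yb; have gap_gt0 : 0 < yb - y0 by rewrite subr_gt0.
rewrite mulrAC ler_pdivlMr //.
case: (relu_cases y0) => -[y0_sgn ->].
  have yb_ge0 : 0 <= yb by lra.
  rewrite (relu_pos yb_ge0) mulrC.
  by apply: ler_wpM2l; [exact: ltW | rewrite -{1}(relu_pos y0_sgn) relu_lip].
rewrite !subr0; case: (relu_cases y) => -[y_sgn ->]; first last.
  by rewrite normr0 mul0r mulr_ge0 // /relu le_max lexx.
have yb_ge0 : 0 <= yb by lra.
rewrite (relu_pos yb_ge0) !ger0_norm //; last by lra.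
(* y (yb - y0) <= yb (y - y0) reduces to y0 yb <= y0 y, true as y0 < 0, y <= yb *)
by nra.
Qed.

Definition secant (S : set R) (y0 : R) : R :=
  if `[< S = [set y0] >] then 0
  else (relu (sup S) - relu y0) / (sup S - y0).

(* If S contains y0, is bounded above and is symmetric about y0, then relu on S
   is controlled by the secant coefficient.  Symmetry ensures that either
   S = {y0} or y0 < sup S. *)
Lemma secant_bound (S : set R) (y0 y : R) :
  S y0 -> has_ubound S -> (forall t, S (y0 + t) -> S (y0 - t)) -> S y ->
  `|relu y - relu y0| <= `|secant S y0 * (y - y0)|.
Proof.
move=> S_y0 S_ub S_sym S_y; have S_sup : has_sup S by split; first exists y0.
have le_sup z : S z -> z <= sup S by move=> S_z; exact: sup_upper_bound.
rewrite /secant; case: asboolP => [S_eq|S_neq].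
  by move: S_y; rewrite S_eq => /= ->; rewrite subrr normr0 mul0r normr0.
have y0_lt_sup : y0 < sup S.
  rewrite ltNge; apply/negP => sup_le; apply: S_neq; apply/seteqP; split => z /=.
    move=> S_z; have := S_sym (z - y0); rewrite addrC subrK => /(_ S_z) S_z'.
    have := le_sup _ S_z'; have := le_sup _ S_z; lra.
  by move=> ->.
rewrite normrM [`|_ / _|]ger0_norm; first exact: relu_secant (le_sup _ S_y).
by rewrite divr_ge0 // subr_ge0 ?relu_le // ltW.
Qed.

End ReluSecant.

Section AffineImage.
Variables (R : realType) (m n : nat) (A : 'M[R]_(m, n)) (b : 'cV[R]_m).
Variables (x0 : 'cV[R]_n) (D : 'M[R]_n) (eps : R).

Let X := Xset x0 D eps.
Let y0 := A *m x0 + b.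

Lemma affine_shift (w : 'cV[R]_n) i :
  (A *m (x0 + w) + b) i 0 = y0 i 0 + (A *m w) i 0.
Proof. by rewrite mulmxDr !mxE; ring. Qed.

Lemma Yi_mem (dx : 'cV[R]_n) i :
  enorm dx <= eps -> Yi A b X i (y0 i 0 + (A *m (D *m dx)) i 0).
Proof. by move=> dx_le; exists (x0 + D *m dx); [exists dx | rewrite affine_shift]. Qed.

Lemma Yi_inv i z : Yi A b X i z ->
  exists2 dx, enorm dx <= eps & z = y0 i 0 + (A *m (D *m dx)) i 0.
Proof. by move=> [_ [dx dx_le <-] <-]; exists dx; rewrite ?affine_shift. Qed.

Lemma Yi_center i : 0 <= eps -> Yi A b X i (y0 i 0).
Proof.
move=> eps_ge0; have := @Yi_mem 0 i; rewrite enorm0 !mulmx0.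
by rewrite [X in _ + X]mxE addr0; apply.
Qed.

Lemma Yi_ub i : has_ubound (Yi A b X i).
Proof.
exists (y0 i 0 + (\sum_j `|(A *m D) i j|) * eps) => _ /Yi_inv[dx dx_le ->].
rewrite lerD2l mulmxA; apply: le_trans (ler_norm _) _.
apply: le_trans (entry_bound _ _ _) _; apply: ler_wpM2l => //.
exact: sumr_ge0.
Qed.

(* X is symmetric about x0, hence Y_i is symmetric about y0_i. *)
Lemma Yi_sym i t : Yi A b X i (y0 i 0 + t) -> Yi A b X i (y0 i 0 - t).
Proof.
move=> /Yi_inv[dx dx_le /addrI ->].
have := @Yi_mem (- dx) i; rewrite enormN !mulmxN.
by rewrite [X in _ + X]mxE; apply.
Qed.

(* Entrywise increment bound for F = relu(A . + b) on X: the coefficient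
   rcoef is by definition the secant coefficient of Y_i at y0_i. *)
Lemma relu_increment_entry (dx : 'cV[R]_n) i : 0 <= eps -> enorm dx <= eps ->
  `|relu (y0 i 0 + (A *m (D *m dx)) i 0) - relu (y0 i 0)|
    <= `|rcoef A b x0 X i * (A *m (D *m dx)) i 0|.
Proof.
move=> eps_ge0 dx_le; have := secant_bound (Yi_center i eps_ge0) (Yi_ub i)
  (@Yi_sym i) (Yi_mem i dx_le).
by rewrite addrAC subrr add0r.
Qed.

End AffineImage.

Lemma diag01_idem (R : realType) n (d : 'I_n -> bool) (v : 'cV[R]_n) :
  diag01 R d *m (diag01 R d *m v) = diag01 R d *m v.
Proof.
apply/matrixP => i j; rewrite /diag01 !mul_diag_mx !mxE.
by case: (d i); rewrite ?mul1r ?mul0r.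
Qed.

Theorem theorem2 (R : realType) (m n : nat) (A : 'M[R]_(m, n)) (b : 'cV[R]_m)
    (x0 : 'cV[R]_n) (eps : R) (d : 'I_n -> bool) :
  0 <= eps ->
  (local_lip (fun x : 'cV[R]_n => relu_vec (A *m x + b)) x0
     (Xset x0 (diag01 R d) eps)
   <= (opnorm (Rmat A b x0 (Xset x0 (diag01 R d) eps) *m A *m diag01 R d))%:E)%E.
Proof.
move=> eps_ge0; apply: ge_ereal_sup => _ [-> | [x [[dx dx_le <-] x_neq] <-]].
  by rewrite lee_fin opnorm_ge0.
set D := diag01 R d; set X := Xset x0 D eps; set w := D *m dx.
have -> : x0 + w - x0 = w by rewrite addrC addKr.
have w_gt0 : 0 < enorm w.
  rewrite lt_def enorm_ge0 andbT; apply/eqP => /enorm_eq0 w0; apply: x_neq.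
  by rewrite -/D -/w w0 addr0.
rewrite lee_fin ler_pdivrMr //; apply: le_trans (opnorm_bound _ w).
apply: enorm_mono => i; set y0 := A *m x0 + b.
have -> : (Rmat A b x0 X *m A *m D *m w) i 0 = rcoef A b x0 X i * (A *m w) i 0.
  by rewrite -!mulmxA diag01_idem /Rmat mul_diag_mx mxE [_ 0 i]mxE.
have -> : (relu_vec (A *m (x0 + w) + b) - relu_vec y0) i 0
    = relu (y0 i 0 + (A *m w) i 0) - relu (y0 i 0) by rewrite -affine_shift !mxE.
exact: relu_increment_entry.
Qed.
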